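(* Let $P$ be a positive event pattern and $I$ an event stream. Run the following algorithm: set $V := \emptyset$ and $final\_count := 0$; process the events of $I$ one at a time in nondecreasing order of time; for an event $e$ of type $E$, let $Pr := \{p \in V : p.type \in predTypes(E),\ p.time < e.time\}$; if $E = start(P)$ or $Pr \neq \emptyset$, then add $e$ to $V$, set $e.count := [E = start(P)] + \sum_{p \in Pr} p.count$ (where $[\cdot]$ is $1$ if true and $0$ otherwise), and, if $E = end(P)$, increase $final\_count$ by $e.count$; finally return $final\_count$. Then for every event $e$ added to $V$, $e.count$ equals the number of sequences $(e_1,\dots,e_m)$, $m\ge 1$, of events of $I$ with $e_m = e$, $e_1.type = start(P)$, $e_1.time < e_2.time < \dots < e_m.time$ and $e_l.type \in predTypes(e_{l+1}.type)$ for all $1 \le l < m$ (i.e., the number of sub-trends from a START event to $e$ in the GRETA graph), and the returned value $final\_count$ equals the number of event trends matched by $P$ in $I$.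
   Context: Events: each event $e$ has an event type $e.type$ and an occurrence time $e.time \in \mathbb{Q}_{\ge 0}$. An event stream $I$ is a finite collection of distinct events arriving in nondecreasing order of time. Positive patterns: an event type $E$ is a pattern; if $P_i,P_j$ are patterns then $P_i+$ and $\mathsf{SEQ}(P_i,P_j)$ are patterns; each event type occurs at most once in a pattern. Matches over $I$: $matches(E)=\{(e): e\in I, e.type=E\}$; $(e_1,\dots,e_k)\in matches(\mathsf{SEQ}(P_i,P_j))$ iff for some $1\le m\le k$, $(e_1,\dots,e_m)\in matches(P_i)$, $(e_{m+1},\dots,e_k)\in matches(P_j)$ and $e_1.time<\dots<e_k.time$; $matches(P_i+)$ consists of concatenations $s_1\cdots s_k$ ($k\ge1$) with each $s_l\in matches(P_i)$ and the last event of $s_l$ strictly earlier than the first event of $s_{l+1}$. Event trends matched by $P$ in $I$ are the elements of $matches(P)$. Define $start(E)=end(E)=E$, $start(P_i+)=start(P_i)$, $end(P_i+)=end(P_i)$, $start(\mathsf{SEQ}(P_i,P_j))=start(P_i)$, $end(\mathsf{SEQ}(P_i,P_j))=end(P_j)$. GRETA template of $P$: its states are the event types in $P$; for every sub-pattern $\mathsf{SEQ}(P_i,P_j)$ of $P$ there is a transition from $end(P_i)$ to $start(P_j)$, and for every sub-pattern $P_i+$ of $P$ there is a transition from $end(P_i)$ to $start(P_i)$. For an event type $E$, $predTypes(E)$ is the set of event types $E'$ such that the template has a transition from $E'$ to $E$. *)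

From mathcomp Require Import all_boot all_order all_algebra.
Set Implicit Arguments. Unset Strict Implicit. Unset Printing Implicit Defensive.
Import Order.TTheory GRing.Theory Num.Theory.

Inductive pat (T : Type) : Type :=
| PEv of T
| PPlus of pat T
| PSeq of pat T & pat T.
Arguments PEv {T}. Arguments PPlus {T}. Arguments PSeq {T}.

Section Defs.
Variables (T Ev : eqType) (ty : Ev -> T) (tm : Ev -> rat).

Fixpoint ptypes (P : pat T) : seq T :=
  match P with
  | PEv E => [:: E]
  | PPlus P1 => ptypes P1
  | PSeq P1 P2 => ptypes P1 ++ ptypes P2
  end.

Fixpoint pstart (P : pat T) : T :=
  match P with PEv E => E | PPlus P1 => pstart P1 | PSeq P1 _ => pstart P1 end.

Fixpoint pend (P : pat T) : T :=
  match P with PEv E => E | PPlus P1 => pend P1 | PSeq _ P2 => pend P2 end.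

Fixpoint trans (P : pat T) : seq (T * T) :=
  match P with
  | PEv _ => [::]
  | PPlus P1 => (pend P1, pstart P1) :: trans P1
  | PSeq P1 P2 => (pend P1, pstart P2) :: trans P1 ++ trans P2
  end.

(* E' \in predTypes(E) *)
Definition isPred (P : pat T) (E' E : T) : bool := (E', E) \in trans P.

Definition incr (s : seq Ev) : bool := sorted (fun a b => (tm a < tm b)%R) s.

Definition gapr (x y : seq Ev) : bool :=
  match rev x, y with
  | a :: _, b :: _ => (tm a < tm b)%R
  | _, _ => true
  end.

Fixpoint matches (I : seq Ev) (P : pat T) (s : seq Ev) : Prop :=
  match P with
  | PEv E => exists e, s = [:: e] /\ e \in I /\ ty e = E
  | PSeq P1 P2 => exists s1 s2, s = s1 ++ s2 /\ matches I P1 s1 /\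
                   matches I P2 s2 /\ incr s
  | PPlus P1 => exists ss : seq (seq Ev), ss != [::] /\ s = flatten ss /\
                   (forall x, x \in ss -> matches I P1 x) /\ sorted gapr ss
  end.

Definition subtrend (I : seq Ev) (P : pat T) (e : Ev) (s : seq Ev) : Prop :=
  (forall x, x \in s -> x \in I) /\
  (exists e1 rest, s = e1 :: rest /\ ty e1 = pstart P /\ last e1 rest = e) /\
  incr s /\ sorted (fun a b => isPred P (ty a) (ty b)) s.

Definition counts (A : seq Ev -> Prop) (n : nat) : Prop :=
  exists l : seq (seq Ev), uniq l /\ (forall s, s \in l <-> A s) /\ size l = n.

(* one step of the algorithm; state = (V with counts, final_count) *)
Definition step (P : pat T) (st : seq (Ev * nat) * nat) (e : Ev)
  : seq (Ev * nat) * nat :=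
  let Pr := [seq p <- st.1 | isPred P (ty p.1) (ty e) && (tm p.1 < tm e)%R] in
  if (ty e == pstart P) || (Pr != [::]) then
    let c := ((ty e == pstart P) : nat) + sumn [seq p.2 | p <- Pr] in
    ((e, c) :: st.1, if ty e == pend P then st.2 + c else st.2)
  else st.

Definition greta (P : pat T) (I : seq Ev) : seq (Ev * nat) * nat :=
  foldl (step P) ([::], 0) I.

End Defs.

From mathcomp Require Import all_boot all_order all_algebra.
Set Implicit Arguments. Unset Strict Implicit. Unset Printing Implicit Defensive.
Import Order.TTheory.

(* The count of an event e is a sum over its predecessors in the GRETA graph of
   P over I, i.e. the events p with ty p in predTypes(ty e) and tm p < tm e.
   As I is processed in nondecreasing order of time, every such p has already
   been processed, with its final count, when e arrives.  So by induction along
   the stream e.count is the number of paths of the graph from a START event to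
   e, such a path being either [e] or a path to a predecessor extended by e; and
   final_count is the number of paths from a START to an END event.  When the
   event types of P are distinct these paths are exactly the trends matched by P:
   a path of SEQ(P1,P2) leaves the event types of P1 only through the transition
   end(P1) -> start(P2), and a path of P1+ cuts into matches of P1 at its
   transitions end(P1) -> start(P1). *)

Section Paths.
Variable X : Type.

Lemma path_closed (e e' : rel X) (Q : pred X) x s :
  (forall a b, Q a -> e a b -> Q b && e' a b) ->
  Q x -> path e x s -> path e' x s && Q (last x s).
Proof.
move=> closed; elim: s x => [|y s IHs] x //= Qx /andP[exy pys].
by have /andP[Qy ->] := closed _ _ Qx exy; exact: IHs.
Qed.

Lemma path_split_first (e cut : rel X) x s :
  path e x s ->
  path [rel a b | e a b && ~~ cut a b] x s \/
  exists b y c, [/\ s = b ++ y :: c, path [rel a b | e a b && ~~ cut a b] x b,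
                    e (last x b) y, cut (last x b) y & path e y c].
Proof.
elim: s x => [|y s IHs] x /=; first by left.
case/andP=> exy pys; have [cxy|ncxy] := boolP (cut x y).
  by right; exists [::], y, s.
case: (IHs y pys) => [p|[b [z [c [-> pb ez cz pc]]]]]; first by left; rewrite /= exy.
by right; exists (y :: b), z, c; split=> //=; rewrite exy ncxy.
Qed.

End Paths.

Lemma sorted_lt_mem_prefix (X : eqType) (d : Order.disp_t) (O : porderType d)
    (f : X -> O) J e K p :
  sorted (fun a b => (f a <= f b)%O) (J ++ e :: K) ->
  p \in J ++ e :: K -> (f p < f e)%O -> p \in J.
Proof.
have le_trans' : transitive (fun a b => (f a <= f b)%O) by move=> ? ? ? /le_trans; apply.
move=> /cat_sorted2[_ /= /(order_path_min le_trans') /allP eK].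
rewrite mem_cat inE => /or3P[//|/eqP->|/eK /le_gtF-> //]; by rewrite ltxx.
Qed.

Section Counting.
Variable Ev : eqType.
Implicit Types (A B : seq Ev -> Prop) (n m : nat).

Lemma eq_counts A B n : (forall s, A s <-> B s) -> counts A n -> counts B n.
Proof.
move=> AB [l [ul [memA sz]]]; exists l; split=> //; split=> // s.
by split=> [/memA/AB|/AB/memA].
Qed.

Lemma counts0 A : (forall s, ~ A s) -> counts A 0.
Proof. by move=> nA; exists [::]; split=> //; split=> // s; split=> // /nA. Qed.

Lemma counts0_empty A s : counts A 0 -> ~ A s.
Proof. by case=> [[|t l]] [_ [memA]] //= _ /memA. Qed.

Lemma counts1_if (b : bool) (t : seq Ev) : counts (fun s => b /\ s = t) b.
Proof.
case: b; last by apply: counts0 => s [].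
exists [:: t]; split=> //; split=> // s; rewrite inE.
by split=> [/eqP|[_ ->]].
Qed.

Lemma counts_disjointU A B n m :
  counts A n -> counts B m -> (forall s, A s -> B s -> False) ->
  counts (fun s => A s \/ B s) (n + m).
Proof.
move=> [lA [uA [memA szA]]] [lB [uB [memB szB]]] AB.
exists (lA ++ lB); split; last split; last by rewrite size_cat szA szB.
- rewrite cat_uniq uA uB andbT; apply/hasPn => s /memB Bs.
  by apply/negP => /memA /AB; apply.
- move=> s; rewrite mem_cat.
  by split=> [/orP[/memA|/memB]|[/memA|/memB]->]; [left|right|rewrite ?orbT..].
Qed.

Lemma counts_image A (f : seq Ev -> seq Ev) n :
  injective f -> counts A n -> counts (fun s => exists2 t, A t & s = f t) n.
Proof.
move=> inj_f [l [ul [memA sz]]]; exists (map f l).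
split; last split; last by rewrite size_map.
- by rewrite map_inj_uniq.
- move=> s; split=> [/mapP[t /memA At ->]|[t /memA lt ->]]; [by exists t | exact: map_f].
Qed.

Lemma counts_bigcup (B : Ev -> seq Ev -> Prop) (L : seq (Ev * nat)) :
  uniq (map fst L) -> (forall p c, (p, c) \in L -> counts (B p) c) ->
  (forall p q s, B p s -> B q s -> p = q) ->
  counts (fun s => exists2 p, p \in map fst L & B p s) (sumn (map snd L)).
Proof.
move=> + + Bfun; elim: L => [|[p c] L IHL] /=.
  by move=> _ _; apply: counts0 => s [].
case/andP=> pL uL cL.
have cp : counts (B p) c by apply: cL; rewrite mem_head.
have cL' : counts _ _ := IHL uL (fun q d qd => cL q d (@mem_behead _ (_ :: L) _ qd)).
apply: eq_counts (counts_disjointU cp cL' _) => [s|s Bps [q qL Bqs]].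
- split=> [[Bps|[q qL Bqs]]|[q]]; first by exists p; rewrite ?mem_head.
  + by exists q; rewrite // inE qL orbT.
  + by rewrite inE => /orP[/eqP-> | qL] Bqs; [left | right; exists q].
- by move: pL; rewrite (Bfun _ _ _ Bps Bqs) qL.
Qed.

End Counting.

Section Template.
Variable T : eqType.
Implicit Types (P : pat T) (a b : T).

Lemma pstart_ptypes P : pstart P \in ptypes P.
Proof. by elim: P => [E|P1 IH|P1 IH1 P2 IH2] //=; rewrite ?mem_head // mem_cat IH1. Qed.

Lemma pend_ptypes P : pend P \in ptypes P.
Proof. by elim: P => [E|P1 IH|P1 IH1 P2 IH2] //=; rewrite ?mem_head // mem_cat IH2 orbT. Qed.

Lemma isPred_PPlus P1 a b :
  isPred (PPlus P1) a b = ((a == pend P1) && (b == pstart P1)) || isPred P1 a b.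
Proof. by rewrite /isPred /= in_cons xpair_eqE. Qed.

Lemma isPred_PSeq P1 P2 a b :
  isPred (PSeq P1 P2) a b =
  [|| (a == pend P1) && (b == pstart P2), isPred P1 a b | isPred P2 a b].
Proof. by rewrite /isPred /= in_cons xpair_eqE mem_cat. Qed.

Lemma isPred_ptypes P a b : isPred P a b -> (a \in ptypes P) && (b \in ptypes P).
Proof.
elim: P => [E|P1 IH|P1 IH1 P2 IH2] //=.
- rewrite isPred_PPlus => /orP[/andP[/eqP-> /eqP->]|/IH //].
  by rewrite pend_ptypes pstart_ptypes.
- rewrite isPred_PSeq !mem_cat.
  case/or3P=> [/andP[/eqP-> /eqP->]|/IH1/andP[-> ->]|/IH2/andP[-> ->]];
  by rewrite ?pend_ptypes ?pstart_ptypes ?orbT.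
Qed.

Section DisjointSeq.
Variables P1 P2 : pat T.
Hypothesis uP : uniq (ptypes (PSeq P1 P2)).

Lemma ptypes_PSeq_disjoint a : a \in ptypes P1 -> a \in ptypes P2 -> False.
Proof.
move: uP; rewrite /= cat_uniq => /and3P[_ /hasPn/(_ a) aP1 _] a1 /aP1.
by rewrite a1.
Qed.

Lemma isPred_PSeq_left a b : a \in ptypes P1 -> isPred (PSeq P1 P2) a b ->
  if b \in ptypes P1 then isPred P1 a b else (a == pend P1) && (b == pstart P2).
Proof.
move=> a1; rewrite isPred_PSeq => /or3P[ab|ab|ab].
- case: ifP => // b1; case/andP: ab => _ /eqP bP2.
  by case: (ptypes_PSeq_disjoint b1); rewrite bP2 pstart_ptypes.
- by have /andP[_ ->] := isPred_ptypes ab.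
- by case: (ptypes_PSeq_disjoint a1); case/andP: (isPred_ptypes ab).
Qed.

Lemma isPred_PSeq_right a b : a \in ptypes P2 -> isPred (PSeq P1 P2) a b ->
  isPred P2 a b.
Proof.
move=> a2; rewrite isPred_PSeq => /or3P[/andP[/eqP aP1 _]|ab|//].
- by case: (ptypes_PSeq_disjoint (pend_ptypes P1)); rewrite -aP1.
- by case/andP: (isPred_ptypes ab) => /ptypes_PSeq_disjoint/(_ a2).
Qed.

End DisjointSeq.
End Template.

Section Trends.
Variables (T Ev : eqType) (ty : Ev -> T) (tm : Ev -> rat) (I : seq Ev).
Implicit Types (P : pat T) (x y e : Ev) (r s : seq Ev).

Definition edge P : rel Ev := fun a b => isPred P (ty a) (ty b) && (tm a < tm b)%R.

Definition walk P x r : bool := all (mem I) (x :: r) && path (edge P) x r.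

Definition trend P s : bool :=
  if s is x :: r then [&& ty x == pstart P, ty (last x r) == pend P & walk P x r]
  else false.

Definition subtrendb P e s : bool :=
  if s is x :: r then [&& ty x == pstart P, last x r == e & walk P x r] else false.

Lemma walk_cat P x r1 y r2 :
  walk P x (r1 ++ y :: r2) = [&& walk P x r1, edge P (last x r1) y & walk P y r2].
Proof.
rewrite /walk -cat_cons all_cat cat_path /=.
by case: (x \in I); case: (y \in I); case: (all _ r1); case: (all _ r2);
  rewrite /= ?andbF.
Qed.

Lemma walk_rcons P x r y :
  walk P x (rcons r y) = [&& walk P x r, edge P (last x r) y & y \in I].
Proof. by rewrite -cats1 walk_cat /walk /= !andbT. Qed.

Lemma sub_walk P Q x r : (forall a b, isPred P a b -> isPred Q a b) ->
  walk P x r -> walk Q x r.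
Proof.
move=> PQ /andP[rI w]; rewrite /walk rI; apply: sub_path w => a b.
by rewrite /edge => /andP[/PQ-> ->].
Qed.

Lemma subtrendP P e s : reflect (subtrend ty tm I P e s) (subtrendb P e s).
Proof.
case: s => [|x r] /=; first by constructor=> -[_ [[? [? []]]]].
rewrite /walk (path_relI (fun a b => isPred P (ty a) (ty b))).
apply: (iffP and3P) => [[/eqP hx /eqP hl /and3P[rI wP wT]]|].
  by split; [exact/allP | split; [exists x, r | split]].
case=> rI [[_ [_ [[<- <-] [hx hl]]]] [wT wP]].
by rewrite hx hl; split=> //; apply/and3P; split=> //; apply/allP.
Qed.

Lemma subtrend_mem P e s : subtrend ty tm I P e s -> e \in I.
Proof. by case=> sI [[x [r [Es [_ <-]]]] _]; apply: sI; rewrite Es mem_last. Qed.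

Lemma subtrend_last P e p s :
  subtrend ty tm I P e s -> subtrend ty tm I P p s -> e = p.
Proof. by case=> _ [[x [r [-> [_ <-]]]] _] [_ [[x' [r' [[<- <-] [_ <-]]]] _]]. Qed.

Lemma subtrendE P e s : e \in I ->
  subtrend ty tm I P e s <->
  (ty e = pstart P /\ s = [:: e]) \/
  exists p t, [/\ edge P p e, subtrend ty tm I P p t & s = rcons t e].
Proof.
move=> eI; split.
- case: s => [|x r] /subtrendP //= /and3P[/eqP hx /eqP <-].
  case/lastP: r => [|r y]; first by left.
  rewrite walk_rcons last_rcons => /and3P[w ep _]; right.
  by exists (last x r), (x :: r); split=> //; apply/subtrendP; rewrite /= hx !eqxx.
- case=> [[he ->]|[p [[|x r] [ep /subtrendP //= /and3P[hx /eqP hl w] ->]]]].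
    by apply/subtrendP; rewrite /= he !eqxx /walk /= eI.
  by apply/subtrendP; rewrite /= last_rcons walk_rcons hx hl ep w eI eqxx.
Qed.

Lemma trend_subtrend P s :
  trend P s <-> exists2 e, ty e = pend P & subtrend ty tm I P e s.
Proof.
split=> [|[e he /subtrendP]]; case: s => [|x r] //= /and3P[hx /eqP hl w].
  by exists (last x r) => //; apply/subtrendP; rewrite /= hx eqxx.
by rewrite hx hl he eqxx.
Qed.

End Trends.

Section Language.
Variables (T Ev : eqType) (ty : Ev -> T) (tm : Ev -> rat) (I : seq Ev).
Local Notation edge := (edge ty tm).
Local Notation walk := (walk ty tm I).
Local Notation trend := (trend ty tm I).
Local Notation matches := (matches ty tm I).

Lemma gapr_cons (x y : Ev) r r' :
  gapr tm (x :: r) (y :: r') = (tm (last x r) < tm y)%R.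
Proof. by rewrite /gapr lastI rev_rcons. Qed.

Lemma trend_flatten (P1 : pat T) ss : ss != [::] ->
  (forall b, b \in ss -> trend P1 b) -> sorted (gapr tm) ss ->
  trend (PPlus P1) (flatten ss).
Proof.
have lift x r : walk P1 x r -> walk (PPlus P1) x r.
  by apply: sub_walk => a b ab; rewrite isPred_PPlus ab orbT.
elim: ss => [//|b ss IHss] _ tss /= gss.
have : trend P1 b by apply: tss; rewrite mem_head.
case: b gss tss => [//|x r] gss tss /and3P[hx /eqP hl /lift w].
case: ss IHss gss tss => [|b' ss] IHss; first by rewrite /= cats0 hx hl eqxx w.
case/andP=> g gss tss.
have tb' : trend P1 b' by apply: tss; rewrite !inE eqxx orbT.
have : trend (PPlus P1) (flatten (b' :: ss)).
  by apply: IHss => // c cin; apply: tss; rewrite inE cin orbT.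
case: b' tb' g {IHss gss tss} => [|y r'] // _.
rewrite gapr_cons => g /and3P[hy hl' w'].
by rewrite /= last_cat walk_cat hx hl' w w' /edge isPred_PPlus hl (eqP hy) !eqxx g.
Qed.

Lemma matches_trend (P : pat T) s : matches P s -> trend P s.
Proof.
elim: P s => [E|P1 IH|P1 IH1 P2 IH2] s /=.
- by case=> e [-> [eI <-]]; rewrite /= eqxx /walk /= eI.
- case=> ss [ss0 [-> [mss gss]]].
  by apply: trend_flatten => // b /mss; exact: IH.
- case=> s1 [s2 [-> [/IH1 t1 [/IH2 t2]]]].
  case: s1 t1 => [|x r] //= /and3P[hx /eqP hl w1].
  case: s2 t2 => [|y r'] //= /and3P[hy hl' w2].
  rewrite /incr /= cat_path /= => /and3P[_ lt _].
  rewrite last_cat walk_cat hx hl' /edge isPred_PSeq hl (eqP hy) !eqxx lt /=.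
  rewrite (sub_walk _ w1) ?(sub_walk _ w2) // => a b ab; by rewrite isPred_PSeq ab ?orbT.
Qed.

Lemma trend_matches_PPlus (P1 : pat T) s :
  (forall s, trend P1 s -> matches P1 s) ->
  trend (PPlus P1) s -> matches (PPlus P1) s.
Proof.
move=> IH; case: s => [//|x r]; have [n] := ubnP (size r).
elim: n x r => // n IHn x r /ltnSE ltrn /and3P[/eqP hx /eqP hl /andP[rI w]].
pose cut a b := (ty a == pend P1) && (ty b == pstart P1).
have noncut a b : edge (PPlus P1) a b && ~~ cut a b -> edge P1 a b.
  by rewrite /edge isPred_PPlus /cut => /andP[/andP[/orP[->|->] ->]].
case: (path_split_first cut w) => [wr|[b [y [c [Er wb ej /andP[/eqP hb /eqP hy] wc]]]]].
  exists [:: x :: r]; split=> //; split; first by rewrite /= cats0.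
  split=> [_ /[!inE] /eqP->|//]; apply: IH.
  by rewrite /= hx hl !eqxx /walk rI; apply: sub_path wr.
subst r; move: rI; rewrite -cat_cons all_cat => /andP[bI cI].
have mb : matches P1 (x :: b).
  by apply: IH; rewrite /= hx hb !eqxx /walk bI; apply: sub_path wb.
have [ss [ss0 [Ess [mss gss]]]] : matches (PPlus P1) (y :: c).
  apply: IHn; last by move: hl; rewrite /= last_cat => ->; rewrite hy !eqxx /walk cI.
  by apply: leq_trans ltrn; rewrite size_cat /= addnS ltnS leq_addl.
exists ((x :: b) :: ss); split=> //; split; first by rewrite /= Ess.
split=> [z /[!inE] /orP[/eqP-> //|/mss //]|].
case: ss ss0 Ess mss gss => [//|[|z b'] ss] _ Ess mss gss.
  by have := matches_trend (mss _ (mem_head _ _)).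
rewrite /= [path _ _ ss]gss andbT gapr_cons; case: Ess => <- _; exact: (andP ej).2.
Qed.

Lemma trend_matches_PSeq (P1 P2 : pat T) s : uniq (ptypes (PSeq P1 P2)) ->
  (forall s, trend P1 s -> matches P1 s) -> (forall s, trend P2 s -> matches P2 s) ->
  trend (PSeq P1 P2) s -> matches (PSeq P1 P2) s.
Proof.
move=> uP IH1 IH2; case: s => [//|x r] /= /and3P[/eqP hx /eqP hl /andP[rI w]].
have x1 : ty x \in ptypes P1 by rewrite hx pstart_ptypes.
have stay1 a b : ty a \in ptypes P1 ->
    edge (PSeq P1 P2) a b && ~~ (ty b \notin ptypes P1) ->
    (ty b \in ptypes P1) && edge P1 a b.
  rewrite negbK => a1 /andP[/andP[/(isPred_PSeq_left uP a1) ab lt] b1].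
  by move: ab; rewrite b1 /edge lt andbT.
case: (path_split_first (fun a b => ty b \notin ptypes P1) w) => [wr|].
  have /andP[_ l1] := path_closed stay1 x1 wr.
  by case: (ptypes_PSeq_disjoint uP l1); rewrite hl pend_ptypes.
case=> b [y [c [Er wb ej yn1 wc]]]; subst r.
have /andP[wb1 lb1] := path_closed stay1 x1 wb.
have /andP[hb hy] : (ty (last x b) == pend P1) && (ty y == pstart P2).
  by case/andP: ej => /(isPred_PSeq_left uP lb1); rewrite (negbTE yn1).
have stay2 a d : ty a \in ptypes P2 -> edge (PSeq P1 P2) a d ->
    (ty d \in ptypes P2) && edge P2 a d.
  move=> a2 /andP[/(isPred_PSeq_right uP a2) ad lt].
  by rewrite /edge ad lt !andbT; case/andP: (isPred_ptypes ad).
have y2 : ty y \in ptypes P2 by rewrite (eqP hy) pstart_ptypes.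
have /andP[wc2 _] := path_closed stay2 y2 wc.
move: rI; rewrite -cat_cons all_cat => /andP[bI cI].
exists (x :: b), (y :: c); split=> //; split.
  by apply: IH1; rewrite /= hx hb eqxx /walk bI.
split; first by apply: IH2; rewrite /= hy -hl last_cat eqxx /walk cI.
by apply: sub_path w => a d /andP[].
Qed.

Lemma matchesP (P : pat T) s : uniq (ptypes P) -> reflect (matches P s) (trend P s).
Proof.
move=> uP; apply: (iffP idP); last exact: matches_trend.
elim: P uP s => [E|P1 IH|P1 IH1 P2 IH2] uP s.
- case: s => [|x [|y r]] //= /and3P[/eqP hx _ /andP[/andP[xI _] w]].
    by exists x.
  by move: w; rewrite /= /edge /isPred.
- exact: trend_matches_PPlus (IH uP).
- have /= := uP; rewrite cat_uniq => /and3P[u1 _ u2].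
  exact: trend_matches_PSeq uP (IH1 u1) (IH2 u2).
Qed.

End Language.

Section Algorithm.
Variables (T Ev : eqType) (ty : Ev -> T) (tm : Ev -> rat) (P : pat T) (I : seq Ev).
Local Notation subtrend := (subtrend ty tm I P).
Local Notation edge := (edge ty tm P).

Definition predecessors (V : seq (Ev * nat)) (e : Ev) := [seq p <- V | edge p.1 e].

Lemma counts_subtrend V e :
  e \in I -> uniq (map fst V) ->
  (forall p c, (p, c) \in V -> counts (subtrend p) c) ->
  (forall p t, subtrend p t -> (tm p < tm e)%R -> p \in map fst V) ->
  counts (subtrend e) ((ty e == pstart P) + sumn (map snd (predecessors V e))).
Proof.
move=> eI uV cV Vcomplete; set Pr := predecessors V e.
have PrV : subseq Pr V := filter_subseq _ _.
have memPr p : (p \in map fst Pr) = (p \in map fst V) && edge p e.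
  by rewrite -(filter_map fst (edge^~ e)) mem_filter andbC.
have cPr : counts _ _ := counts_bigcup (subseq_uniq (map_subseq _ PrV) uV)
  (fun p c pc => cV p c (mem_subseq PrV pc)) (@subtrend_last _ _ ty tm I P).
have cExt := counts_image (@rcons_injl _ e) cPr.
apply: eq_counts (counts_disjointU (counts1_if _ [:: e]) cExt _).
- move=> s; have sE := subtrendE ty tm P s eI; split.
    case=> [[/eqP he Es]|[t [p pPr pt] Es]]; apply/sE; [by left | right].
    by exists p, t; split=> //; move: pPr; rewrite memPr => /andP[].
  move/sE=> [[he ->]|[p [t [pe pt ->]]]]; [by left; split=> //; apply/eqP | right].
  exists t => //; exists p => //; rewrite memPr pe andbT.
  by apply: Vcomplete pt _; case/andP: pe.
- move=> s [_ ->] [t [p _ pt]] /(congr1 size).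
  rewrite size_rcons => -[/esym/size0nil tnil].
  by move: pt; rewrite tnil => /subtrendP.
Qed.

Definition trends_ending_in (J : seq Ev) (s : seq Ev) : Prop :=
  exists2 e, e \in J & ty e = pend P /\ subtrend e s.

Lemma counts_trends_ending_in_rcons J e f c :
  e \notin J -> counts (trends_ending_in J) f -> counts (subtrend e) c ->
  counts (trends_ending_in (rcons J e)) (if ty e == pend P then f + c else f).
Proof.
move=> eJ cJ ce; case: eqP => he.
- apply: eq_counts (counts_disjointU cJ ce _) => [s|s [p pJ [_ ps]] es].
    split=> [[[p pJ ps]|es]|[p]].
    + by exists p; rewrite // mem_rcons inE pJ orbT.
    + by exists e; rewrite ?mem_rcons ?mem_head.
    + by rewrite mem_rcons inE => /orP[/eqP-> [_ es]|pJ ps]; [right | left; exists p].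
  by move: eJ; rewrite -(subtrend_last ps es) pJ.
- apply: eq_counts cJ => s; split=> [[p pJ ps]|[p]].
    by exists p; rewrite // mem_rcons inE pJ orbT.
  by rewrite mem_rcons inE => /orP[/eqP-> [/he]|pJ ps] //; exists p.
Qed.

Definition greta_inv (J : seq Ev) (st : seq (Ev * nat) * nat) : Prop :=
  [/\ uniq (map fst st.1), {subset map fst st.1 <= J},
      forall e c, (e, c) \in st.1 -> counts (subtrend e) c,
      forall e s, e \in J -> subtrend e s -> e \in map fst st.1 &
      counts (trends_ending_in J) st.2].

Lemma greta_inv_nil : greta_inv [::] ([::], 0).
Proof. by split=> //; apply: counts0 => s []. Qed.

Hypothesis uI : uniq I.
Hypothesis sI : sorted (fun a b => (tm a <= tm b)%R) I.

Lemma greta_inv_step J e K st : I = J ++ e :: K ->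
  greta_inv J st -> greta_inv (rcons J e) (step ty tm P st e).
Proof.
case: st => V f EI [/= uV VJ cV Vc cF].
have eI : e \in I by rewrite EI mem_cat mem_head orbT.
have eJ : e \notin J.
  by move: uI; rewrite EI cat_uniq => /and3P[_ /hasPn/(_ e (mem_head _ _))].
have before p : p \in I -> (tm p < tm e)%R -> p \in J.
  by rewrite EI; apply: sorted_lt_mem_prefix; rewrite -EI.
have ce := counts_subtrend eI uV cV (fun p t pt lt =>
  Vc p t (before p (subtrend_mem pt) lt) pt).
have cF' := counts_trends_ending_in_rcons eJ cF ce.
have Jsub : {subset J <= rcons J e} by move=> p pJ; rewrite mem_rcons inE pJ orbT.
rewrite /step -/(predecessors V e); case: ifP => [_|skip].
  split=> //=.
  - by rewrite uV andbT; apply: contra eJ; exact: VJ.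
  - by move=> p; rewrite inE => /orP[/eqP->|/VJ/Jsub //]; rewrite mem_rcons mem_head.
  - by move=> p c; rewrite inE => /orP[/eqP[-> ->] //|/cV].
  - move=> p s; rewrite mem_rcons !inE => /orP[/eqP-> _|pJ /(Vc _ _ pJ) ->].
      by rewrite eqxx.
    by rewrite orbT.
have c0 : (ty e == pstart P) + sumn (map snd (predecessors V e)) = 0.
  by move: skip; case: (ty e == _); case: (predecessors V e).
rewrite c0 addn0 if_same in cF'; rewrite c0 in ce.
split=> //= [p /VJ/Jsub //|p s].
by rewrite mem_rcons inE => /orP[/eqP-> /(counts0_empty ce) []|pJ /(Vc _ _ pJ)].
Qed.

Lemma greta_inv_foldl J K st : I = J ++ K ->
  greta_inv J st -> greta_inv I (foldl (step ty tm P) st K).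
Proof.
elim: K J st => [|e K IHK] J st EI inv /=; first by rewrite EI cats0.
by apply: (IHK (rcons J e)); [rewrite cat_rcons | exact: greta_inv_step EI inv].
Qed.

Lemma greta_invariant : greta_inv I (greta ty tm P I).
Proof. exact: greta_inv_foldl greta_inv_nil. Qed.

End Algorithm.

Theorem theorem4 (T Ev : eqType) (ty : Ev -> T) (tm : Ev -> rat)
  (P : pat T) (I : seq Ev) :
  uniq (ptypes P) ->
  uniq I ->
  (forall e, e \in I -> (0 <= tm e)%R) ->
  sorted (fun a b => (tm a <= tm b)%R) I ->
  (forall e c, (e, c) \in (greta ty tm P I).1 ->
     counts (subtrend ty tm I P e) c) /\
  counts (matches ty tm I P) (greta ty tm P I).2.
Proof.
move=> uP uI _ sI; have [_ _ cV _ cF] := greta_invariant ty P uI sI.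
split=> //; apply: eq_counts cF => s.
split=> [[e _ [he es]]|/(matchesP ty tm I s uP)/trend_subtrend[e he es]].
  by apply/(matchesP ty tm I s uP)/trend_subtrend; exists e.
by exists e => //; exact: subtrend_mem es.
Qed.
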